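(* Let $n\ge2$ and $0\le r_l\le r_u<1$. For all $x,y\in\mathbb{B}^n$ with $r_l\le|x|\le|y|\le r_u$, $$\frac{1+r_l}{\sqrt{5+2r_l+r_l^2}}\,\mathrm{th}\frac{\rho_{\mathbb{B}^n}(x,y)}{2}\le w_{\mathbb{B}^n}(x,y)\le s_{\mathbb{B}^n}(x,y)\le\frac{1+r_u^2}{2\sqrt{1-2r_u+2r_u^2}}\,\mathrm{th}\frac{\rho_{\mathbb{B}^n}(x,y)}{2}.$$
   Context: $\mathbb{B}^n$ is the unit ball of $\mathbb{R}^n$; $S^{n-1}(x,r)$ is the Euclidean sphere of center $x$ and radius $r$. For a domain $G\subsetneq\mathbb{R}^n$ and $x\in G$, $d_G(x)=\inf\{|x-z|:z\in\partial G\}$. The hyperbolic metric of the unit ball satisfies $\mathrm{th}\frac{\rho_{\mathbb{B}^n}(x,y)}{2}=\frac{|x-y|}{\sqrt{|x-y|^2+(1-|x|^2)(1-|y|^2)}}$. The triangular ratio metric is $s_G(x,y)=\frac{|x-y|}{\inf_{z\in\partial G}(|x-z|+|z-y|)}$. For a convex domain $G$, the $w$-quasi-metric is $w_G(x,y)=\frac{|x-y|}{\min\{\inf_{\tilde y\in\tilde Y}|x-\tilde y|,\ \inf_{\tilde x\in\tilde X}|y-\tilde x|\}}$, where $\tilde X=\{\tilde x\in S^{n-1}(x,2d_G(x)):(x+\tilde x)/2\in\partial G\}$ and $\tilde Y=\{\tilde y\in S^{n-1}(y,2d_G(y)):(y+\tilde y)/2\in\partial G\}$. *)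

From mathcomp Require Import all_boot all_order all_algebra.
From mathcomp Require Import boolp classical_sets reals.
Set Implicit Arguments. Unset Strict Implicit. Unset Printing Implicit Defensive.
Import Order.TTheory GRing.Theory Num.Theory.
Local Open Scope ring_scope.
Local Open Scope classical_set_scope.

Section Defs.
Variables (R : realType) (n : nat).
Implicit Types (x y z : 'rV[R]_n) (B : set 'rV[R]_n).

Definition enorm x : R := Num.sqrt (\sum_(i < n) x ord0 i ^+ 2).

Definition esphere (c : 'rV[R]_n) (r : R) : set 'rV[R]_n :=
  [set z | enorm (z - c) = r].

Definition unit_ball : set 'rV[R]_n := [set x | enorm x < 1].
Definition unit_sphere : set 'rV[R]_n := esphere 0 1.

(* d_G(x) = inf_{z in dG} |x - z|, with B = dG the boundary of G *)
Definition dist_bd B x : R := inf [set enorm (x - z) | z in B].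

Definition s_metric B x y : R :=
  enorm (x - y) / inf [set enorm (x - z) + enorm (z - y) | z in B].

Definition refl_set B x : set 'rV[R]_n :=
  [set xt | esphere x (2 * dist_bd B x) xt /\ B (2^-1 *: (x + xt))].

Definition w_metric B x y : R :=
  enorm (x - y) /
  Num.min (inf [set enorm (x - yt) | yt in refl_set B y])
          (inf [set enorm (y - xt) | xt in refl_set B x]).

(* th (rho_{B^n}(x,y) / 2), given by the standard closed formula *)
Definition th_half_rho x y : R :=
  enorm (x - y) /
  Num.sqrt (enorm (x - y) ^+ 2 + (1 - enorm x ^+ 2) * (1 - enorm y ^+ 2)).

End Defs.

From mathcomp Require Import all_boot all_order all_algebra.
From mathcomp Require Import boolp classical_sets reals.
From mathcomp.algebra_tactics Require Import ring lra.
Import Order.TTheory GRing.Theory Num.Theory.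
Local Open Scope ring_scope.

(* Write A = sqrt(|x-y|^2 + (1-|x|^2)(1-|y|^2)), so th(rho/2) = |x-y|/A, and
   let T = inf_{|z|=1} (|x-z| + |z-y|) be the denominator of s.  Everything
   reduces to three estimates on denominators, for |x| <= |y| and y = |y| m:
   (1) for |z| = 1, A <= |y| |x-z| + |y-z|; adding the symmetric bound gives
       T >= 2A / (1+|y|), which yields the upper bound on s;
   (2) the reflected points of y (resp. x) are the points (2-|y|) m, and the
       segment from x to (2-|y|) m crosses the sphere at a point whose radial
       projection z has |x-z| + |z-y| <= |x-(2-|y|) m|; hence T is at most the
       denominator of w, i.e. w <= s;
   (3) (1+r_l) |x-(2-|y|) m| <= sqrt(5+2r_l+r_l^2) A, a polynomial inequality
       in |x|, |y| and t = <x, m>, which yields the lower bound on w. *)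

Section InnerProduct.
Context {R : realType} {n : nat}.
Implicit Types (u v w : 'rV[R]_n).

Definition dot u v : R := \sum_(i < n) u ord0 i * v ord0 i.

Lemma dotC u v : dot u v = dot v u.
Proof. by apply: eq_bigr => i _; rewrite mulrC. Qed.

Lemma dotDl u v w : dot (u + v) w = dot u w + dot v w.
Proof. by rewrite /dot -big_split; apply: eq_bigr => i _; rewrite !mxE mulrDl. Qed.

Lemma dotZl (c : R) u v : dot (c *: u) v = c * dot u v.
Proof. by rewrite /dot mulr_sumr; apply: eq_bigr => i _; rewrite !mxE mulrA. Qed.

Lemma dotZr (c : R) u v : dot v (c *: u) = c * dot v u.
Proof. by rewrite dotC dotZl dotC. Qed.

Lemma dotBl u v w : dot (u - v) w = dot u w - dot v w.
Proof. by rewrite dotDl -scaleN1r dotZl mulN1r. Qed.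

Lemma dotBr u v w : dot w (u - v) = dot w u - dot w v.
Proof. by rewrite !(dotC w) dotBl. Qed.

Lemma dot0l u : dot 0 u = 0.
Proof. by rewrite -(scale0r 0) dotZl mul0r. Qed.

Lemma dotBB u v : dot (u - v) (u - v) = dot u u - 2 * dot u v + dot v v.
Proof. rewrite !(dotBl, dotBr) (dotC v u); ring. Qed.

Lemma dot_self_ge0 u : 0 <= dot u u.
Proof. by apply: sumr_ge0 => i _; rewrite -expr2 sqr_ge0. Qed.

Lemma dot_self_eq0 u : dot u u = 0 -> u = 0.
Proof.
move=> /eqP; rewrite psumr_eq0 => [/allP u0|i _]; last by rewrite -expr2 sqr_ge0.
apply/rowP => j; rewrite !mxE.
by have := u0 j (mem_index_enum j); rewrite mulf_eq0 orbb => /eqP.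
Qed.

Lemma enormE u : enorm u = Num.sqrt (dot u u).
Proof. by rewrite /enorm /dot; congr Num.sqrt; apply: eq_bigr => i _; rewrite expr2. Qed.

Lemma enorm_ge0 u : 0 <= enorm u.
Proof. exact: sqrtr_ge0. Qed.

Lemma enorm_sqr u : enorm u ^+ 2 = dot u u.
Proof. by rewrite enormE sqr_sqrtr // dot_self_ge0. Qed.

Lemma enorm_unique (r : R) u : 0 <= r -> dot u u = r ^+ 2 -> enorm u = r.
Proof. by move=> r0 uu; rewrite enormE uu sqrtr_sqr ger0_norm. Qed.

Lemma enorm_eq0 u : enorm u = 0 -> u = 0.
Proof. by move=> u0; apply: dot_self_eq0; rewrite -enorm_sqr u0 expr0n. Qed.

Lemma enormB_sym u v : enorm (u - v) = enorm (v - u).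
Proof. by rewrite !enormE !dotBB (dotC u v); congr Num.sqrt; ring. Qed.

Lemma enormZ (c : R) u : enorm (c *: u) = `|c| * enorm u.
Proof. by rewrite !enormE dotZl dotZr mulrA -expr2 sqrtrM ?sqr_ge0 // sqrtr_sqr. Qed.

(* Cauchy-Schwarz, via 0 <= |<v,v> u - <u,v> v|^2. *)
Lemma cauchy_schwarz u v : dot u v ^+ 2 <= dot u u * dot v v.
Proof.
have [vv0|vv_neq0] := eqVneq (dot v v) 0.
  by rewrite (dot_self_eq0 _ vv0) dotC !dot0l; lra.
have vv_gt0 : 0 < dot v v by rewrite lt_def vv_neq0 dot_self_ge0.
have := dot_self_ge0 (dot v v *: u - dot u v *: v).
rewrite dotBB !(dotZl, dotZr) => h.
have : 0 <= dot v v * (dot u u * dot v v - dot u v ^+ 2) by nra.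
by rewrite pmulr_rge0 // subr_ge0.
Qed.

Lemma dot_le_enorm u v : dot u v <= enorm u * enorm v.
Proof.
rewrite !enormE -sqrtrM ?dot_self_ge0 //; apply: le_trans (ler_norm _) _.
rewrite -sqrtr_sqr ler_sqrt ?cauchy_schwarz // mulr_ge0 ?dot_self_ge0 //.
Qed.

Lemma enormB_ge u v : enorm u - enorm v <= enorm (u - v).
Proof.
have [h|h] := lerP (enorm u - enorm v) 0; first exact: le_trans h (enorm_ge0 _).
rewrite [enorm (u - v)]enormE -(ger0_norm (ltW h)) -sqrtr_sqr ler_sqrt ?dot_self_ge0 //.
by rewrite dotBB -!enorm_sqr; have := dot_le_enorm u v; nra.
Qed.

Lemma radial_projection_closer v p : enorm v <= 1 -> 1 <= enorm p ->
  enorm (v - (enorm p)^-1 *: p) <= enorm (v - p).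
Proof.
move=> v1 p1; have pp := enorm_sqr p.
have vp : dot v p <= enorm p.
  by apply: le_trans (dot_le_enorm v p) _; rewrite ger_pMl //; lra.
set r := enorm p in p1 pp vp *; set k := dot v p in vp *.
have p_gt0 : 0 < r by lra.
rewrite [enorm (v - _ *: p)]enormE [enorm (v - p)]enormE ler_sqrt ?dot_self_ge0 //.
rewrite !dotBB dotZr dotZl dotZr -pp -/k.
have r_neq0 : r != 0 by rewrite gt_eqF.
have -> : r^-1 * (r^-1 * r ^+ 2) = 1 by field.
have kr : r^-1 * k <= 1 by rewrite mulrC ler_pdivrMr // mul1r.
have kE : k = (r^-1 * k) * r by field.
have : 0 <= (r - 1) * (r + 1 - 2 * (r^-1 * k)) by apply: mulr_ge0; lra.
lra.
Qed.

End InnerProduct.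

Section UnitSphere.
Context {R : realType} {n : nat}.
Implicit Types (u v x y m z : 'rV[R]_n).

Lemma unit_sphereP z : unit_sphere z <-> dot z z = 1.
Proof.
rewrite /unit_sphere /esphere /= subr0; split => [z1|zz].
  by rewrite -enorm_sqr z1 expr1n.
by apply: enorm_unique; rewrite ?zz ?expr1n.
Qed.

Lemma enorm_unit m : dot m m = 1 -> enorm m = 1.
Proof. by move=> mm; apply: enorm_unique; rewrite ?mm ?expr1n. Qed.

Lemma unit_vector_exists : (0 < n)%N -> exists m : 'rV[R]_n, dot m m = 1.
Proof.
move=> n_gt0; have n_pos : (0 : R) < n%:R by rewrite ltr0n.
exists (const_mx (Num.sqrt n%:R)^-1); rewrite /dot.
under eq_bigr do rewrite !mxE.
rewrite sumr_const card_ord -mulr_natl -expr2 exprVn sqr_sqrtr; last lra.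
have n_neq0 : (n%:R : R) != 0 by rewrite gt_eqF.
by rewrite -mulr_natl; field.
Qed.

Lemma polar_decomposition x : (0 < n)%N -> exists m, dot m m = 1 /\ x = enorm x *: m.
Proof.
move=> n_gt0; have [->|x_neq0] := eqVneq x 0.
  have [m mm] := unit_vector_exists n_gt0.
  by exists m; rewrite -(scale0r 0) enormZ normr0 mul0r !scale0r.
have nx_neq0 : enorm x != 0 by apply: contra_neq x_neq0; apply: enorm_eq0.
exists ((enorm x)^-1 *: x); split; last by rewrite scalerA mulfV // scale1r.
by rewrite dotZl dotZr -enorm_sqr; field.
Qed.

Lemma dist_bd_unit_sphere x : (0 < n)%N -> enorm x < 1 ->
  dist_bd (@unit_sphere R n) x = 1 - enorm x.
Proof.
move=> n_gt0 x1; have [m [mm xm]] := polar_decomposition x n_gt0.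
have xm_dist : enorm (x - m) = 1 - enorm x.
  apply: enorm_unique; first by have := enorm_ge0 x; lra.
  by rewrite dotBB {1 2 3}xm !(dotZl, dotZr) mm; ring.
apply/eqP; rewrite eq_le; apply/andP; split.
  apply: ge_inf; last by exists m => //; apply/unit_sphereP.
  by exists 0 => _ [z _ <-]; apply: enorm_ge0.
apply: lb_le_inf; first by exists (enorm (x - m)), m => //; apply/unit_sphereP.
move=> _ [z /unit_sphereP zz <-].
by rewrite enormB_sym -(enorm_unit _ zz); apply: enormB_ge.
Qed.

Lemma refl_set_unit_sphere y yt : (0 < n)%N -> enorm y < 1 ->
  refl_set (@unit_sphere R n) y yt <->
  exists m, [/\ dot m m = 1, y = enorm y *: m & yt = (2 - enorm y) *: m].
Proof.
move=> n_gt0 y1; rewrite /refl_set /esphere /= dist_bd_unit_sphere //.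
have two_neq0 : (2 : R) != 0 by rewrite pnatr_eq0.
split=> [[yt_dist /unit_sphereP]|[m [mm ym ->]]]; last first.
  split; last first.
    have -> : 2^-1 *: (y + (2 - enorm y) *: m) = m.
      by rewrite {1}ym -scalerDl addrC subrK scalerA mulVf // scale1r.
    exact/unit_sphereP.
  rewrite {2}ym -scalerBl enormZ (enorm_unit _ mm) mulr1 ger0_norm; first ring.
  by have := enorm_ge0 y; lra.
set m := 2^-1 *: (y + yt) => mm.
have ytE : yt = 2 *: m - y by rewrite /m scalerA mulfV // scale1r addrC addKr.
clearbody m; exists m.
have my_dist : enorm (m - y) = 1 - enorm y.
  have ytyE : yt - y = 2 *: (m - y).
    by rewrite ytE scalerBr [2 *: y]scaler_nat mulr2n opprD addrA.
  by move: yt_dist; rewrite ytyE enormZ ger0_norm; lra.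
have yE : y = enorm y *: m.
  apply/esym/eqP; rewrite -subr_eq0; apply/eqP/dot_self_eq0.
  have := enorm_sqr (m - y); rewrite my_dist dotBB mm.
  rewrite dotBB !(dotZl, dotZr) mm -enorm_sqr (dotC m y).
  set b := enorm y; set c := dot y m => e; nra.
by split=> //; rewrite ytE {1}yE scalerBl.
Qed.

(* Key geometric step: if u = |u| m lies in the unit ball and v too, then the
   segment from v to the reflected point (2 - |u|) m meets the tangent plane
   <., m> = 1; the radial projection z of that point onto the sphere satisfies
   |v - z| + |u - z| <= |v - (2 - |u|) m|. *)
Lemma sphere_point_below_reflection u v m :
  enorm u < 1 -> enorm v < 1 -> dot m m = 1 -> u = enorm u *: m ->
  exists z, dot z z = 1 /\
    enorm (v - z) + enorm (u - z) <= enorm (v - (2 - enorm u) *: m).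
Proof.
move=> u1 v1 mm um; have m1 := enorm_unit _ mm.
set a := enorm u in u1 um *; have a_ge0 : 0 <= a by apply: enorm_ge0.
set s := dot v m.
have s_le : s <= enorm v by have := dot_le_enorm v m; rewrite m1 mulr1.
set ut := (2 - a) *: m.
have den_gt0 : 0 < 2 - a - s by lra.
set t := (1 - s) / (2 - a - s).
have t_ge0 : 0 <= t by apply: divr_ge0; lra.
have t_le1 : t <= 1 by rewrite ler_pdivrMr // mul1r; lra.
set p := v + t *: (ut - v).
have pm : dot p m = 1.
  rewrite /p dotDl dotZl dotBl /ut dotZl mm -/s /t.
  have den_neq0 : 2 - a - s != 0 by rewrite gt_eqF.
  by field.
have p1 : 1 <= enorm p by have := dot_le_enorm p m; rewrite m1 mulr1 pm.
exists ((enorm p)^-1 *: p); split.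
  rewrite dotZl dotZr -enorm_sqr.
  have p_neq0 : enorm p != 0 by rewrite gt_eqF //; lra.
  by field.
have v1' : enorm v <= 1 by lra.
have u1' : enorm u <= 1 by rewrite -/a; lra.
apply: le_trans (lerD (radial_projection_closer _ _ v1' p1)
                      (radial_projection_closer _ _ u1' p1)) _.
have -> : enorm (u - p) = enorm (ut - p).
  rewrite !enormE; congr Num.sqrt.
  by rewrite !dotBB {1 2 3}um /ut !(dotZl, dotZr) mm (dotC m p) pm; ring.
have -> : v - p = t *: (v - ut).
  by rewrite /p opprD addrA subrr add0r -scalerN opprB.
have -> : ut - p = (1 - t) *: (ut - v).
  by rewrite /p opprD addrA scalerBl scale1r.
by rewrite !enormZ (enormB_sym ut) !ger0_norm; lra.
Qed.

Definition th_den u v : R :=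
  Num.sqrt (enorm (u - v) ^+ 2 + (1 - enorm u ^+ 2) * (1 - enorm v ^+ 2)).

Lemma th_den_gt0 u v : enorm u < 1 -> enorm v < 1 -> 0 < th_den u v.
Proof.
move=> u1 v1; rewrite sqrtr_gt0 ltr_pwDr ?sqr_ge0 //.
by apply: mulr_gt0; rewrite subr_gt0 expr_lt1 ?enorm_ge0.
Qed.

(* For z on the unit sphere, th_den u v <= |v| |u - z| + |v - z|: this is
   Cauchy-Schwarz for u - z and |v|^2 z - v, a vector of norm |v| |v - z|. *)
Lemma th_den_le_sphere u v z : dot z z = 1 ->
  th_den u v <= enorm v * enorm (u - z) + enorm (v - z).
Proof.
move=> zz.
have b_ge0 := enorm_ge0 v; have p_ge0 := enorm_ge0 (u - z).
have q_ge0 := enorm_ge0 (v - z).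
have vv := enorm_sqr v; have uu := enorm_sqr u.
have pp := enorm_sqr (u - z); have qq := enorm_sqr (v - z).
have dd := enorm_sqr (u - v).
rewrite dotBB zz in pp; rewrite dotBB zz in qq; rewrite dotBB in dd.
set b := enorm v in b_ge0 vv *; set p := enorm (u - z) in p_ge0 pp *.
set q := enorm (v - z) in q_ge0 qq *.
have mirror : enorm (b ^+ 2 *: z - v) = b * q.
  apply: enorm_unique; first exact: mulr_ge0.
  by rewrite dotBB !(dotZl, dotZr) zz exprMn qq -vv (dotC z v); ring.
have cs := dot_le_enorm (u - z) (b ^+ 2 *: z - v).
rewrite mirror !(dotBl, dotBr, dotZr) zz (dotC z v) -/p in cs.
rewrite /th_den dd uu vv -(ger0_norm (_ : 0 <= b * p + q)); last first.
  by apply: addr_ge0 => //; apply: mulr_ge0.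
rewrite -sqrtr_sqr ler_sqrt ?sqr_ge0 //.
have -> : (b * p + q) ^+ 2 = b ^+ 2 * p ^+ 2 + 2 * (p * (b * q)) + q ^+ 2 by ring.
rewrite pp qq -vv; nra.
Qed.

End UnitSphere.

Section PolynomialBound.
Context {R : realFieldType}.
Implicit Types r a b t : R.

(* The polynomial gap in estimate (3) at r = a; it is affine in t. *)
Definition refl_gap a b t : R :=
  4 * (1 - 2 * b * t + a ^+ 2 * b ^+ 2)
  - (1 + a) ^+ 2 * (1 - b) * (a ^+ 2 * (1 + b) + 3 - b - 4 * t).

(* The gap is nonnegative on 0 <= a <= b < 1, |t| <= a: being affine in t it
   suffices to check t = -a and t = a, where explicit sum-of-nonnegative-terms
   decompositions are available. *)
Lemma refl_gap_ge0 a b t : 0 <= a -> a <= b -> b < 1 -> - a <= t -> t <= a ->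
  0 <= refl_gap a b t.
Proof.
move=> a_ge0 ab b1 t_lo t_hi.
have at_neg : 0 <= refl_gap a b (- a).
  have -> : refl_gap a b (- a) = (a ^+ 3 + a ^+ 2 + 3 * a - 1) ^+ 2
      + (b - a) * ((4 * a ^+ 2 - (1 + a) ^+ 3 * (1 - a)) * (b + a)
                   + 8 * a + 4 * (1 + a) ^+ 3) by rewrite /refl_gap; ring.
  apply: addr_ge0; first exact: sqr_ge0.
  apply: mulr_ge0; first lra.
  have : 0 <= (1 + a) ^+ 3 by apply: exprn_ge0; lra.
  have : (1 - a) * (b + a) <= 2 by nra.
  nra.
have at_pos : 0 <= refl_gap a b a.
  have -> : refl_gap a b a = 4 * ((1 - a) + (1 - b) - 2 * (1 - a) * (1 - b)) ^+ 2
      + (1 - a) ^+ 3 * (1 - b) * (8 - 6 * (1 - b) - 2 * (1 - a) + (1 - a) * (1 - b))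
    by rewrite /refl_gap; ring.
  apply: addr_ge0; first by apply: mulr_ge0; [lra | exact: sqr_ge0].
  apply: mulr_ge0; last nra.
  by apply: mulr_ge0; [apply: exprn_ge0 | ]; lra.
set c := - 8 * b + 4 * (1 + a) ^+ 2 * (1 - b).
have from_neg : refl_gap a b t = refl_gap a b (- a) + (t + a) * c.
  by rewrite /refl_gap /c; ring.
have from_pos : refl_gap a b t = refl_gap a b a + (t - a) * c.
  by rewrite /refl_gap /c; ring.
have [c_ge0|c_lt0] := lerP 0 c; nra.
Qed.

(* Estimate (3) in coordinates: with a = |x|, b = |y|, t = <x, m>, the left
   side is (1+r)^2 |x - (2-b) m|^2 and the right side is (5+2r+r^2) A^2. *)
Lemma refl_dist_poly_bound r a b t : 0 <= r -> r <= a -> a <= b -> b < 1 ->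
  - a <= t -> t <= a ->
  (1 + r) ^+ 2 * (a ^+ 2 - 2 * (2 - b) * t + (2 - b) ^+ 2)
  <= (5 + 2 * r + r ^+ 2) * (a ^+ 2 - 2 * b * t + b ^+ 2 + (1 - a ^+ 2) * (1 - b ^+ 2)).
Proof.
move=> r_ge0 ra ab b1 t_lo t_hi.
have gap := refl_gap_ge0 _ _ _ (le_trans r_ge0 ra) ab b1 t_lo t_hi.
rewrite -subr_ge0.
have -> : (5 + 2 * r + r ^+ 2) * (a ^+ 2 - 2 * b * t + b ^+ 2 + (1 - a ^+ 2) * (1 - b ^+ 2))
    - (1 + r) ^+ 2 * (a ^+ 2 - 2 * (2 - b) * t + (2 - b) ^+ 2)
  = 4 * (1 - 2 * b * t + a ^+ 2 * b ^+ 2)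
    - (1 + r) ^+ 2 * ((1 - b) * (a ^+ 2 * (1 + b) + 3 - b - 4 * t)) by ring.
have lead_ge0 : 0 <= 1 - 2 * b * t + a ^+ 2 * b ^+ 2.
  have : b * t <= b * a by apply: ler_wpM2l; lra.
  have := sqr_ge0 (1 - a * b); nra.
have [f_ge0|f_lt0] := lerP 0 (a ^+ 2 * (1 + b) + 3 - b - 4 * t).
  have : (1 + r) ^+ 2 <= (1 + a) ^+ 2 by nra.
  have : 0 <= (1 - b) * (a ^+ 2 * (1 + b) + 3 - b - 4 * t) by apply: mulr_ge0; lra.
  move: gap; rewrite /refl_gap; nra.
have : (1 + r) ^+ 2 * ((1 - b) * (a ^+ 2 * (1 + b) + 3 - b - 4 * t)) <= 0.
  by apply: mulr_ge0_le0; [exact: sqr_ge0 | apply: mulr_ge0_le0; lra].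
nra.
Qed.

Lemma upper_constant_bound b ru : 0 <= b -> b <= ru -> ru < 1 ->
  0 < 1 - 2 * ru + 2 * ru ^+ 2 /\
  (1 + b) ^+ 2 * (1 - 2 * ru + 2 * ru ^+ 2) <= (1 + ru ^+ 2) ^+ 2.
Proof.
move=> b_ge0 b_le ru1; split; first nra.
have : (1 + b) ^+ 2 * (1 - 2 * ru + 2 * ru ^+ 2)
       <= (1 + ru) ^+ 2 * (1 - 2 * ru + 2 * ru ^+ 2) by apply: ler_wpM2r; nra.
have : (1 + ru ^+ 2) ^+ 2 - (1 + ru) ^+ 2 * (1 - 2 * ru + 2 * ru ^+ 2)
       = ru ^+ 2 * ((1 - ru) * (3 + ru)) by ring.
have : 0 <= ru ^+ 2 * ((1 - ru) * (3 + ru)).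
  by apply: mulr_ge0; [exact: sqr_ge0 | apply: mulr_ge0; lra].
lra.
Qed.

End PolynomialBound.

Section Denominators.
Context {R : realType} {n : nat}.
Implicit Types (x y m z : 'rV[R]_n).
Local Open Scope classical_set_scope.

Definition tri_inf x y : R :=
  inf [set enorm (x - z) + enorm (z - y) | z in @unit_sphere R n].
Definition refl_inf x y : R :=
  inf [set enorm (x - yt) | yt in refl_set (@unit_sphere R n) y].

Lemma inf_le_nonneg (E : set R) e : (forall r, E r -> 0 <= r) -> E e -> inf E <= e.
Proof. by move=> E_ge0 Ee; apply: ge_inf => //; exists 0 => r /E_ge0. Qed.

Lemma tri_inf_le x y z : dot z z = 1 -> tri_inf x y <= enorm (x - z) + enorm (y - z).
Proof.
move=> zz; rewrite (enormB_sym y); apply: inf_le_nonneg.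
  by move=> _ [w _ <-]; apply: addr_ge0; apply: enorm_ge0.
by exists z => //; apply/unit_sphereP.
Qed.

Lemma tri_inf_sym x y : tri_inf x y = tri_inf y x.
Proof.
congr inf; apply/seteqP; split=> _ [z zS <-]; exists z => //.
  by rewrite addrC !(enormB_sym z).
by rewrite addrC !(enormB_sym z).
Qed.

(* Estimate (1): T >= 2 A / (1 + |y|), by adding th_den_le_sphere for (x, y)
   and for (y, x). *)
Lemma tri_inf_lower x y : (0 < n)%N -> enorm x <= enorm y -> enorm y < 1 ->
  2 * th_den x y / (1 + enorm y) <= tri_inf x y.
Proof.
move=> n_gt0 xy y1; have b_ge0 := enorm_ge0 y.
apply: lb_le_inf.
  have [z zz] := @unit_vector_exists R n n_gt0.
  by exists (enorm (x - z) + enorm (z - y)), z => //; apply/unit_sphereP.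
move=> _ [z /unit_sphereP zz <-]; rewrite (enormB_sym z).
have bound_xy := th_den_le_sphere x y z zz.
have := th_den_le_sphere y x z zz.
rewrite /th_den (enormB_sym y x) [(1 - enorm y ^+ 2) * _]mulrC -/(th_den x y).
have := enorm_ge0 (x - z); have := enorm_ge0 (y - z); have := enorm_ge0 x.
rewrite ler_pdivrMr; last lra.
nra.
Qed.

Lemma tri_inf_le_refl_inf x y : (0 < n)%N -> enorm x < 1 -> enorm y < 1 ->
  tri_inf x y <= refl_inf x y.
Proof.
move=> n_gt0 x1 y1; have [m [mm ym]] := polar_decomposition y n_gt0.
apply: lb_le_inf.
  exists (enorm (x - (2 - enorm y) *: m)), ((2 - enorm y) *: m) => //.
  by apply/refl_set_unit_sphere => //; exists m.
move=> _ [yt /refl_set_unit_sphere [//|//|m' [m'm' ym' ->] <-]].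
have [z [zz zbound]] := sphere_point_below_reflection y x m' y1 x1 m'm' ym'.
exact: le_trans (tri_inf_le x y z zz) zbound.
Qed.

Lemma refl_inf_le x y m : (0 < n)%N -> enorm y < 1 ->
  dot m m = 1 -> y = enorm y *: m ->
  refl_inf x y <= enorm (x - (2 - enorm y) *: m).
Proof.
move=> n_gt0 y1 mm ym; apply: inf_le_nonneg.
  by move=> _ [yt _ <-]; apply: enorm_ge0.
by exists ((2 - enorm y) *: m) => //; apply/refl_set_unit_sphere => //; exists m.
Qed.

Lemma refl_dist_le_th_den rl x y m : 0 <= rl -> rl <= enorm x ->
  enorm x <= enorm y -> enorm y < 1 -> dot m m = 1 -> y = enorm y *: m ->
  (1 + rl) * enorm (x - (2 - enorm y) *: m)
  <= Num.sqrt (5 + 2 * rl + rl ^+ 2) * th_den x y.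
Proof.
move=> rl_ge0 rlx xy y1 mm ym.
have a_ge0 := enorm_ge0 x; have b_ge0 := enorm_ge0 y.
set t := dot x m.
have t_sq : t ^+ 2 <= enorm x ^+ 2.
  by have := cauchy_schwarz x m; rewrite mm mulr1 -enorm_sqr.
have t_lo : - enorm x <= t by nra.
have t_hi : t <= enorm x by nra.
have refl_sq : enorm (x - (2 - enorm y) *: m) ^+ 2
    = enorm x ^+ 2 - 2 * (2 - enorm y) * t + (2 - enorm y) ^+ 2.
  by rewrite !enorm_sqr dotBB !(dotZr, dotZl) mm -/t; ring.
have dist_sq : enorm (x - y) ^+ 2 = enorm x ^+ 2 - 2 * enorm y * t + enorm y ^+ 2.
  have xy_dot : dot x y = enorm y * t by rewrite {1}ym dotZr.
  by rewrite enorm_sqr dotBB xy_dot -!enorm_sqr; ring.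
have lhs_ge0 : 0 <= (1 + rl) * enorm (x - (2 - enorm y) *: m).
  by apply: mulr_ge0; [lra | apply: enorm_ge0].
rewrite /th_den -sqrtrM; last nra.
rewrite -(ger0_norm lhs_ge0) -sqrtr_sqr ler_sqrt; last first.
  apply: mulr_ge0; first nra.
  by apply: addr_ge0; [exact: sqr_ge0 | apply: mulr_ge0; nra].
rewrite exprMn refl_sq dist_sq.
exact: refl_dist_poly_bound.
Qed.

End Denominators.

Lemma ler_wdiv2l {R : realFieldType} {d p q : R} :
  0 <= d -> 0 < p -> p <= q -> d / q <= d / p.
Proof. by move=> d_ge0 p_gt0 pq; rewrite ler_wpM2l // lef_pV2 ?posrE //; lra. Qed.

Section MetricBounds.
Context {R : realType} {n : nat}.
Implicit Types (x y : 'rV[R]_n).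
Hypothesis n_gt0 : (0 < n)%N.

Lemma s_metricE x y :
  s_metric (@unit_sphere R n) x y = enorm (x - y) / tri_inf x y.
Proof. by []. Qed.

Lemma w_metricE x y : w_metric (@unit_sphere R n) x y
  = enorm (x - y) / Num.min (refl_inf x y) (refl_inf y x).
Proof. by []. Qed.

Lemma th_half_rhoE x y : th_half_rho x y = enorm (x - y) / th_den x y.
Proof. by []. Qed.

Lemma tri_inf_gt0 x y : enorm x <= enorm y -> enorm y < 1 -> 0 < tri_inf x y.
Proof.
move=> xy y1; apply: lt_le_trans (tri_inf_lower x y n_gt0 xy y1).
have := enorm_ge0 y; have := th_den_gt0 x y (le_lt_trans xy y1) y1.
by move=> A_gt0 b_ge0; apply: divr_gt0; lra.
Qed.

Lemma tri_inf_le_min_refl_inf x y : enorm x <= enorm y -> enorm y < 1 ->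
  tri_inf x y <= Num.min (refl_inf x y) (refl_inf y x).
Proof.
move=> xy y1; have x1 := le_lt_trans xy y1.
rewrite le_min tri_inf_le_refl_inf //= tri_inf_sym.
exact: tri_inf_le_refl_inf.
Qed.

Lemma w_le_s x y : enorm x <= enorm y -> enorm y < 1 ->
  w_metric (@unit_sphere R n) x y <= s_metric (@unit_sphere R n) x y.
Proof.
move=> xy y1; rewrite w_metricE s_metricE.
apply: ler_wdiv2l; rewrite ?enorm_ge0 ?tri_inf_gt0 //.
exact: tri_inf_le_min_refl_inf.
Qed.

Lemma s_upper_bound ru x y : enorm x <= enorm y -> enorm y <= ru -> ru < 1 ->
  s_metric (@unit_sphere R n) x y
  <= (1 + ru ^+ 2) / (2 * Num.sqrt (1 - 2 * ru + 2 * ru ^+ 2)) * th_half_rho x y.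
Proof.
move=> xy y_le ru1; have y1 : enorm y < 1 by lra.
have b_ge0 := enorm_ge0 y; have d_ge0 := enorm_ge0 (x - y).
have A_gt0 := th_den_gt0 x y (le_lt_trans xy y1) y1.
have [Q_gt0 const_sq] := upper_constant_bound _ _ b_ge0 y_le ru1.
set A := th_den x y in A_gt0 *; set b := enorm y in b_ge0 y_le y1 const_sq *.
set sQ := Num.sqrt (1 - 2 * ru + 2 * ru ^+ 2).
have sQ_gt0 : 0 < sQ by rewrite sqrtr_gt0.
have const_le : (1 + b) * sQ <= 1 + ru ^+ 2.
  rewrite -(ger0_norm (_ : 0 <= 1 + b)); last lra.
  rewrite -sqrtr_sqr -sqrtrM ?sqr_ge0 //.
  rewrite -(ger0_norm (_ : 0 <= 1 + ru ^+ 2)); last nra.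
  by rewrite -[X in _ <= X]sqrtr_sqr ler_sqrt // sqr_ge0.
have s_le : enorm (x - y) / tri_inf x y <= enorm (x - y) / (2 * A / (1 + b)).
  apply: ler_wdiv2l => //; last exact: tri_inf_lower.
  by apply: divr_gt0; lra.
rewrite s_metricE th_half_rhoE -/A; apply: le_trans s_le _.
have -> : enorm (x - y) / (2 * A / (1 + b)) = enorm (x - y) / A * ((1 + b) / 2).
  by field; rewrite gt_eqF //= gt_eqF //; lra.
rewrite [X in _ <= X]mulrC; apply: ler_wpM2l; first by apply: divr_ge0 => //; apply: ltW.
rewrite ler_pdivlMr; last exact: mulr_gt0.
by have -> : (1 + b) / 2 * (2 * sQ) = (1 + b) * sQ by field.
Qed.

Lemma w_lower_bound rl x y : 0 <= rl -> rl <= enorm x ->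
  enorm x <= enorm y -> enorm y < 1 ->
  (1 + rl) / Num.sqrt (5 + 2 * rl + rl ^+ 2) * th_half_rho x y
  <= w_metric (@unit_sphere R n) x y.
Proof.
move=> rl_ge0 rlx xy y1; have d_ge0 := enorm_ge0 (x - y).
have [m [mm ym]] := polar_decomposition y n_gt0.
have A_gt0 := th_den_gt0 x y (le_lt_trans xy y1) y1.
set M := Num.min (refl_inf x y) (refl_inf y x).
set L := enorm (x - (2 - enorm y) *: m).
have M_gt0 : 0 < M.
  exact: lt_le_trans (tri_inf_gt0 x y xy y1) (tri_inf_le_min_refl_inf x y xy y1).
have M_le : M <= L by rewrite ge_min refl_inf_le.
have refl_bound := refl_dist_le_th_den rl x y m rl_ge0 rlx xy y1 mm ym.
set A := th_den x y in A_gt0 refl_bound *; set c := Num.sqrt _ in refl_bound *.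
have c_gt0 : 0 < c by rewrite sqrtr_gt0; nra.
rewrite w_metricE th_half_rhoE -/A -/M.
apply: le_trans _ (ler_wdiv2l d_ge0 M_gt0 M_le).
rewrite ler_pdivlMr; last exact: lt_le_trans M_le.
have -> : (1 + rl) / c * (enorm (x - y) / A) * L
    = enorm (x - y) / (c * A) * ((1 + rl) * L).
  by field; rewrite !gt_eqF.
have cA_gt0 : 0 < c * A by apply: mulr_gt0.
have d_eq : enorm (x - y) / (c * A) * (c * A) = enorm (x - y).
  by rewrite mulfVK // gt_eqF.
rewrite -[X in _ <= X]d_eq; apply: ler_wpM2l refl_bound.
by apply: divr_ge0 => //; apply: mulr_ge0; apply: ltW.
Qed.

End MetricBounds.

Theorem corollary3p8 (R : realType) (n : nat) (rl ru : R) :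
  (2 <= n)%N -> 0 <= rl -> rl <= ru -> ru < 1 ->
  forall x y : 'rV[R]_n,
    unit_ball x -> unit_ball y ->
    rl <= enorm x -> enorm x <= enorm y -> enorm y <= ru ->
    (1 + rl) / Num.sqrt (5 + 2 * rl + rl ^+ 2) * th_half_rho x y
      <= w_metric (@unit_sphere R n) x y
    /\ w_metric (@unit_sphere R n) x y <= s_metric (@unit_sphere R n) x y
    /\ s_metric (@unit_sphere R n) x y
      <= (1 + ru ^+ 2) / (2 * Num.sqrt (1 - 2 * ru + 2 * ru ^+ 2)) * th_half_rho x y.
Proof.
move=> n_ge2 rl_ge0 _ ru1 x y _ y1 rlx xy y_le.
have n_gt0 : (0 < n)%N by apply: leq_trans n_ge2.
split; first exact: w_lower_bound.
by split; [apply: w_le_s | apply: s_upper_bound].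
Qed.
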